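(* Let $0<\epsilon\le 1/2$, let $r=\lceil 2^{22}/\epsilon^2\rceil$ and $\gamma=2r+1$, and let $\delta\ge 0$. Consider a population of agents holding opinions in $\{0,1\}$, in which the fraction of agents holding the correct opinion $\mathcal{B}$ is at least $1/2+\delta$. Take $\gamma$ independent noisy samples, each obtained by choosing an agent uniformly at random from the population and reading its opinion through a channel that flips the bit independently with probability at most $1/2-\epsilon$. Then the probability that the majority of the $\gamma$ samples equals $\mathcal{B}$ is at least $\min\{1/2+4\delta,\ 1/2+1/100\}$.
   Context: The ''bias towards the correct opinion'' of a population being at least $\delta$ means that the fraction of its members holding the correct opinion $\mathcal{B}$ is at least $1/2+\delta$. *)

From HB Require Import structures.
From mathcomp Require Import all_boot all_order all_algebra.
Set Implicit Arguments. Unset Strict Implicit. Unset Printing Implicit Defensive.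
Import Order.TTheory GRing.Theory Num.Theory.
Local Open Scope ring_scope.

Definition frac_correct (R : numFieldType) (n : nat) (op : 'I_n -> bool) (B : bool) : R :=
  (#|[set i | op i == B]|)%:R / n%:R.

Definition observed (n g : nat) (op : 'I_n -> bool)
  (a : {ffun 'I_g -> 'I_n}) (f : {ffun 'I_g -> bool}) (k : 'I_g) : bool :=
  op (a k) (+) f k.

Definition majority_is (n g : nat) (op : 'I_n -> bool) (B : bool)
  (a : {ffun 'I_g -> 'I_n}) (f : {ffun 'I_g -> bool}) : bool :=
  (g < 2 * #|[set k | observed op a f k == B]|)%N.

(* Probability, over g independent samples (agent chosen uniformly at random,
   then the bit flipped independently with probability eta), that the majority
   of the observed samples equals B. *)
Definition maj_prob (R : numFieldType) (n g : nat) (op : 'I_n -> bool)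
  (eta : R) (B : bool) : R :=
  \sum_(a : {ffun 'I_g -> 'I_n}) \sum_(f : {ffun 'I_g -> bool})
     ((n%:R)^-1 ^+ g * (\prod_(k < g) (if f k then eta else 1 - eta)))
     * (majority_is op B a f)%:R.

(* A noisy sample is correct with probability [1/2 + y], where
   [y = (f - 1/2)(1 - 2 eta) >= 2 eps delta] and [f] is the fraction of correct
   agents, so the majority of [2r + 1] samples is correct with the binomial tail
   probability.  Adding the trials two at a time turns that tail into
   [1/2 + y (1 + 2 S)] with [S = sum_(k < r) w_k (1 - 4 y^2)^(k+1)] and
   [w_k = C(2k+1, k) / 4^(k+1) >= 1 / (4 sqrt (k + 1))].  While [8 m y^2 <= 1]
   each of the first [m] terms of [S] is at least [w_(m-1) / 2], so
   [S >= sqrt m / 8].  If [8 r y^2 <= 1] this and [r eps^2 >= 64] give [2 y S >=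
   4 delta]; otherwise the same bound at [m ~ 1 / (8 y^2)] gives [2 y S >= 1/100]. *)

From HB Require Import structures.
From mathcomp Require Import all_boot all_order all_algebra.
From mathcomp Require Import ring lra zify.
Set Implicit Arguments. Unset Strict Implicit. Unset Printing Implicit Defensive.
Import Order.TTheory GRing.Theory Num.Theory.
Local Open Scope ring_scope.

Lemma bin_odd_mid r : 'C(r.*2.+1, r.+1) = 'C(r.*2.+1, r).
Proof. by rewrite -(bin_sub (n := r.*2.+1) (m := r)); [congr binomial|]; lia. Qed.

Lemma bin_even_mid r : 'C(r.*2.+2, r.+1) = ('C(r.*2.+1, r) * 2)%N.
Proof. by rewrite binS bin_odd_mid; lia. Qed.

Section BinomialTail.
Variables (R : comPzRingType) (p q : R).

Definition binom_term n j := 'C(n, j)%:R * p ^+ j * q ^+ (n - j).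

Definition binom_tail n t := \sum_(t <= j < n.+1) binom_term n j.

Lemma binom_tail_recl n t : binom_tail n t = binom_term n t + binom_tail n t.+1.
Proof.
rewrite /binom_tail; case: (ltnP t n.+1) => tn; first by rewrite big_ltn.
by rewrite !big_geq ?(leqW tn) // /binom_term bin_small // !mul0r addr0.
Qed.

Lemma binom_termS n j : binom_term n.+1 j.+1 = p * binom_term n j + q * binom_term n j.+1.
Proof.
rewrite /binom_term binS natrD subSS; case: (ltnP j n) => jn.
  have -> : (n - j = (n - j.+1).+1)%N by lia.
  rewrite !exprS; ring.
by rewrite (bin_small (n := n) (m := j.+1)) // exprS; ring.
Qed.

Lemma binom_tailS n t : binom_tail n.+1 t.+1 = p * binom_tail n t + q * binom_tail n t.+1.
Proof.
rewrite /binom_tail big_add1 /=.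
under eq_bigr do rewrite binom_termS.
rewrite big_split /= -!mulr_sumr; congr (_ + _ * _).
rewrite [RHS]big_add1 /=; case: (ltnP n t) => nt; first by rewrite !big_geq // ltnW.
by rewrite big_nat_recr //= /binom_term bin_small // !mul0r addr0.
Qed.

Hypothesis pq1 : p + q = 1.

Let qE : q = 1 - p. Proof. by rewrite -pq1 addrAC subrr add0r. Qed.

Lemma binom_tailS_sub n t : binom_tail n.+1 t.+1 = binom_tail n t.+1 + p * binom_term n t.
Proof. by rewrite binom_tailS (binom_tail_recl n t) qE; ring. Qed.

Lemma majority_tail_recS r :
  binom_tail r.+1.*2.+1 r.+2 =
  binom_tail r.*2.+1 r.+1 + (p - q) * 'C(r.*2.+1, r)%:R * (p * q) ^+ r.+1.
Proof.
rewrite doubleS 2!binom_tailS_sub (binom_tail_recl r.*2.+1 r.+1) /binom_term bin_odd_mid bin_even_mid.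
have -> : (r.*2.+1 - r.+1 = r)%N by lia.
have -> : (r.*2.+2 - r.+1 = r.+1)%N by lia.
rewrite qE natrM exprMn !exprS; ring.
Qed.

Lemma majority_tail_sum r :
  binom_tail r.*2.+1 r.+1 =
  p + (p - q) * \sum_(0 <= k < r) 'C(k.*2.+1, k)%:R * (p * q) ^+ k.+1.
Proof.
elim: r => [|r IHr].
  by rewrite big_geq // mulr0 addr0 /binom_tail big_nat1 /binom_term bin1 subnn expr0 mulr1 mul1r.
by rewrite majority_tail_recS IHr big_nat_recr //=; ring.
Qed.

End BinomialTail.

Lemma mul_bin_odd_mid k :
  ((k + 2) * 'C(k.*2.+3, k.+1) = 2 * (2 * k + 3) * 'C(k.*2.+1, k))%N.
Proof.
have := mul_bin_diag k.*2.+3 k; have := mul_bin_left k.*2.+2 k.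
have := bin_even_mid k; rewrite /=.
have -> : (k.*2.+2 - k = k + 2)%N by lia.
nia.
Qed.

Section MajorityWeights.
Variable R : realFieldType.

Definition bin_weight k : R := 'C(k.*2.+1, k)%:R / 4 ^+ k.+1.

Lemma bin_weight_gt0 k : 0 < bin_weight k.
Proof. by rewrite divr_gt0 ?exprn_gt0 // ltr0n bin_gt0; lia. Qed.

Lemma bin_weightS k : bin_weight k.+1 = bin_weight k * (2 * k%:R + 3) / (2 * k%:R + 4).
Proof.
have k0 : 0 <= k%:R :> R := ler0n _ _.
have binS_R : 'C(k.*2.+3, k.+1)%:R = 2 * (2 * k%:R + 3) * 'C(k.*2.+1, k)%:R / (k%:R + 2) :> R.
  have := congr1 (fun n : nat => n%:R : R) (mul_bin_odd_mid k).
  rewrite !(natrM, natrD) => <-; field; lra.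
rewrite /bin_weight binS_R exprS; field.
by rewrite expf_neq0 ?pnatr_eq0 //= !gt_eqF //; lra.
Qed.

Lemma bin_weight_leS k : bin_weight k.+1 <= bin_weight k.
Proof.
have k0 : 0 <= k%:R :> R := ler0n _ _.
have := bin_weight_gt0 k; rewrite bin_weightS ler_pdivrMr; last lra.
by move=> ?; nra.
Qed.

Lemma bin_weight_le j k : (j <= k)%N -> bin_weight k <= bin_weight j.
Proof.
move=> /subnKC <-; elim: (k - j)%N => [|m IHm]; first by rewrite addn0.
by rewrite addnS; apply: le_trans (bin_weight_leS _) IHm.
Qed.

(* [bin_weight k] is asymptotic to [1 / (2 sqrt (pi k))]. *)
Lemma bin_weight_sqr_ge k : 1 <= bin_weight k ^+ 2 * (16 * (k%:R + 1)).
Proof.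
elim: k => [|k IHk].
  by rewrite /bin_weight bin0 expr1 add0r; lra.
have k0 : 0 <= k%:R :> R := ler0n _ _.
rewrite bin_weightS -[k.+1%:R]natr1; set w := bin_weight k in IHk *.
have -> : (w * (2 * k%:R + 3) / (2 * k%:R + 4)) ^+ 2 * (16 * (k%:R + 1 + 1))
   = w ^+ 2 * (2 * k%:R + 3) ^+ 2 * (16 * (k%:R + 2)) / (2 * k%:R + 4) ^+ 2.
  by field; lra.
rewrite ler_pdivlMr ?mul1r; last by rewrite exprn_gt0 //; lra.
have growth : (2 * k%:R + 4) ^+ 2 * (k%:R + 1) + (k%:R + 2)
            = (2 * k%:R + 3) ^+ 2 * (k%:R + 2) :> R by ring.
have w2 : 0 <= w ^+ 2 * 16 by rewrite mulr_ge0 ?sqr_ge0.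
nra.
Qed.

Lemma bernoulli_ineq (x : R) m : 0 <= x -> x <= 1 -> 1 - m%:R * x <= (1 - x) ^+ m.
Proof.
move=> x0 x1; elim: m => [|m IHm]; first by rewrite mul0r subr0 expr0.
have m0 : 0 <= m%:R :> R := ler0n _ _.
by rewrite exprS -natr1; nra.
Qed.

Definition bias_series (y : R) m := \sum_(0 <= k < m) bin_weight k * (1 - 4 * y ^+ 2) ^+ k.+1.

Lemma bias_series_ge0 y m : 0 <= y -> y <= 1 / 2 -> 0 <= bias_series y m.
Proof.
move=> y0 y1; apply: sumr_ge0 => k _.
by rewrite mulr_ge0 ?(ltW (bin_weight_gt0 k)) // exprn_ge0 //; nra.
Qed.

Lemma bias_series_le y m m' : 0 <= y -> y <= 1 / 2 -> (m <= m')%N ->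
  bias_series y m <= bias_series y m'.
Proof.
move=> y0 y1 mm'; rewrite /bias_series [leRHS](big_cat_nat _ (n := m)) //= lerDl.
apply: sumr_ge0 => k _.
by rewrite mulr_ge0 ?(ltW (bin_weight_gt0 k)) // exprn_ge0 //; nra.
Qed.

(* Every term is at least [bin_weight m.-1 * (1 - 4 y^2)^m], and by Bernoulli's
   inequality the last factor stays above [1/2] as long as [8 m y^2 <= 1]. *)
Lemma bias_series_sqr_ge y m : 0 <= y -> y <= 1 / 2 ->
  8 * m%:R * y ^+ 2 <= 1 -> m%:R <= 64 * bias_series y m ^+ 2.
Proof.
case: m => [|m] y0 y1 small; first by rewrite mulr_ge0 ?sqr_ge0.
set v := 1 - 4 * y ^+ 2.
have [v0 v1] : 0 <= v /\ v <= 1 by split; rewrite /v; nra.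
have := @bernoulli_ineq (4 * y ^+ 2) m.+1; rewrite -/v => /(_ ltac:(nra) ltac:(nra)) bern.
have w0 := bin_weight_gt0 m; have wsq := bin_weight_sqr_ge m.
rewrite natr1 in wsq; set w := bin_weight m in w0 wsq *.
have terms_ge : m.+1%:R * (w * v ^+ m.+1) <= bias_series y m.+1.
  rewrite mulr_natl -[X in _ *+ X]subn0 -sumr_const_nat; apply: ler_sum_nat => k /andP[_ km].
  by rewrite ler_pM ?exprn_ge0 ?(ltW (bin_weight_gt0 _)) ?bin_weight_le ?ler_wiXn2l //; lia.
have mS0 : 0 <= m.+1%:R :> R := ler0n _ _.
have vm : 1 / 2 <= v ^+ m.+1 by lra.
have half : m.+1%:R * w / 2 <= bias_series y m.+1.
  by have := ler_wpM2l (mulr_ge0 mS0 (ltW w0)) vm; lra.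
have half0 : 0 <= m.+1%:R * w / 2 by rewrite divr_ge0 // mulr_ge0 // ltW.
have := ler_pM half0 half0 half half; have := ler_wpM2l mS0 wsq.
nra.
Qed.

Lemma bias_series_sqr_ge_far y m : 0 <= y -> y <= 1 / 2 -> 1 < 8 * m%:R * y ^+ 2 ->
  1 / 8 - y ^+ 2 <= 64 * y ^+ 2 * bias_series y m ^+ 2.
Proof.
move=> y0 y1; elim: m => [|m IHm]; first by rewrite mulr0 mul0r ltr10.
rewrite -[m.+1%:R]natr1 => far.
have S_le := bias_series_le y0 y1 (leqnSn m).
have S0 := bias_series_ge0 m y0 y1.
have m0 : 0 <= m%:R :> R := ler0n _ _.
case: (lerP (8 * m%:R * y ^+ 2) 1) => [near | /IHm]; last by nra.
have := bias_series_sqr_ge y0 y1 near; nra.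
Qed.

Lemma majority_tail_bias y r :
  binom_tail (1 / 2 + y) (1 / 2 - y) r.*2.+1 r.+1 = 1 / 2 + y * (1 + 2 * bias_series y r).
Proof.
rewrite majority_tail_sum; last by lra.
have -> : \sum_(0 <= k < r) 'C(k.*2.+1, k)%:R * ((1 / 2 + y) * (1 / 2 - y)) ^+ k.+1
        = bias_series y r.
  apply: eq_bigr => k _; rewrite /bin_weight.
  have -> : (1 / 2 + y) * (1 / 2 - y) = (1 - 4 * y ^+ 2) / 4 by field.
  by rewrite expr_div_n; field; rewrite expf_neq0 ?pnatr_eq0.
lra.
Qed.

Lemma ler_sqr_nneg (x c : R) : 0 <= x -> 0 <= c -> c ^+ 2 <= x ^+ 2 -> c <= x.
Proof. by move=> x0 c0; rewrite ler_pXn2r. Qed.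

Lemma bias_amplification (eps delta y : R) r :
  0 < eps -> 0 <= delta -> 0 <= y -> y <= 1 / 2 ->
  2 * eps * delta <= y -> 64 <= r%:R * eps ^+ 2 ->
  Num.min (4 * delta) (1 / 100) <= y * (1 + 2 * bias_series y r).
Proof.
move=> eps0 delta0 y0 y1 y_ge r_ge; have S0 := bias_series_ge0 r y0 y1.
set S := bias_series y r in S0 *; rewrite ge_min.
case: (lerP (8 * r%:R * y ^+ 2) 1) => [near | far]; apply/orP; [left | right].
  have := bias_series_sqr_ge y0 y1 near; rewrite -/S => r_le.
  have Seps : 1 <= S * eps.
    apply: ler_sqr_nneg; [exact: mulr_ge0 S0 (ltW eps0) | lra | rewrite exprMn; nra].
  nra.
have := bias_series_sqr_ge_far y0 y1 far; rewrite -/S => S_ge.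
case: (lerP (1 / 100) y) => y_small; first by nra.
have yS : 1 / 200 <= y * S.
  apply: ler_sqr_nneg; [exact: mulr_ge0 | lra | rewrite exprMn; nra].
nra.
Qed.

End MajorityWeights.

Section Counting.
Variables (R : comPzRingType) (I : finType).

Lemma sum_if_card (P : pred I) (x z : R) :
  \sum_(i : I) (if P i then x else z) = x *+ #|P| + z *+ (#|I| - #|P|).
Proof.
rewrite big_if /= !sumr_const -(cardC P) addKn.
by congr (_ *+ _ + _ *+ _); apply: eq_card.
Qed.

Lemma prod_if_card (P : pred I) (x z : R) :
  \prod_(i : I) (if P i then x else z) = x ^+ #|P| * z ^+ (#|I| - #|P|).
Proof.
rewrite big_if /= !prodr_const -(cardC P) addKn.
by congr (_ ^+ _ * _ ^+ _); apply: eq_card.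
Qed.

Lemma indicator_set_sum (b : I -> bool) (Q : pred {set I}) :
  (Q [set k | b k])%:R = \sum_(S : {set I} | Q S) \prod_(k : I) (b k == (k \in S))%:R :> R.
Proof.
have prod_indicator (S : {set I}) : \prod_(k : I) (b k == (k \in S))%:R = ([set k | b k] == S)%:R :> R.
  case: eqP => [<- | neq]; first by apply: big1 => k _; rewrite inE eqxx.
  have /existsP [k bk] : [exists k, b k != (k \in S)].
    apply: contraT; rewrite negb_exists => /forallP agree.
    by case: neq; apply/setP => k; rewrite inE; apply/eqP/negPn.
  by rewrite (bigD1 k) //= (negbTE bk) mul0r.
under eq_bigr do rewrite prod_indicator.
rewrite big_mkcond (bigD1 [set k | b k]) //= eqxx big1 ?addr0; first by case: (Q _).
by move=> S /negbTE nS; rewrite eq_sym nS if_same.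
Qed.

Lemma sum_set_card (P : pred nat) (h : nat -> R) :
  \sum_(S : {set I} | P #|S|) h #|S| = \sum_(j < #|I|.+1 | P j) 'C(#|I|, j)%:R * h j.
Proof.
rewrite (partition_big (fun S : {set I} => (inord #|S| : 'I_#|I|.+1)) predT) //=.
rewrite [RHS]big_mkcond; apply: eq_bigr => j _.
have cardS (S : {set I}) : (#|S| < #|I|.+1)%N by rewrite ltnS max_card.
rewrite (eq_bigl (fun S : {set I} => P j && (#|S| == j))); last first.
  move=> S /=; rewrite -(inj_eq val_inj) /= inordK //.
  by case: eqP => [-> | ]; rewrite ?andbT ?andbF.
case: (P j); last by rewrite big_pred0.
rewrite (eq_bigr (fun _ => h j)); last by move=> S /= /eqP ->.
rewrite sumr_const mulr_natl -card_draws; congr (_ *+ _).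
by apply: eq_card => S; rewrite inE.
Qed.

End Counting.

Section MajorityProbability.
Variables (R : numFieldType) (n : nat) (op : 'I_n -> bool) (eta : R) (B : bool).
Hypothesis n_gt0 : (0 < n)%N.

Definition success_prob : R :=
  frac_correct R op B * (1 - eta) + (1 - frac_correct R op B) * eta.

Lemma success_prob_sample (s : bool) :
  \sum_(i < n) \sum_(b : bool)
     n%:R^-1 * (if b then eta else 1 - eta) * ((op i (+) b == B) == s)%:R
  = if s then success_prob else 1 - success_prob.
Proof.
have flip_sum i : \sum_(b : bool) n%:R^-1 * (if b then eta else 1 - eta) * ((op i (+) b == B) == s)%:R
    = n%:R^-1 * (if op i == B then (if s then 1 - eta else eta) else (if s then eta else 1 - eta)).
  by rewrite big_bool /=; case: (op i); case: B; case: s; rewrite /= ?mulr0 ?mulr1 ?addr0 ?add0r.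
under eq_bigr do rewrite flip_sum; clear flip_sum.
rewrite -mulr_sumr sum_if_card card_ord /success_prob /frac_correct.
have -> : #|[pred i | op i == B]| = #|[set i | op i == B]| by apply: eq_card => i; rewrite inE.
have cn : (#|[set i | op i == B]| <= n)%N by rewrite -[leqRHS]card_ord max_card.
set c := #|[set i | op i == B]| in cn *.
rewrite -[X in X *+ c]mulr1 -[X in _ + X *+ _]mulr1 -!mulrnAr natrB //.
by case: s; field; rewrite pnatr_eq0 -lt0n.
Qed.

(* Each sample, an agent and a coin drawn independently, is a Bernoulli trial
   with success probability [success_prob]; so the product measure factorises
   over the samples once the majority event is split along the set of successes. *)
Lemma maj_prob_sets g :
  maj_prob g op eta B = \sum_(S : {set 'I_g} | (g < 2 * #|S|)%N)
    success_prob ^+ #|S| * (1 - success_prob) ^+ (g - #|S|).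
Proof.
rewrite /maj_prob.
under eq_bigr do under eq_bigr do
  rewrite /majority_is (@indicator_set_sum R _ _ (fun S : {set 'I_g} => g < 2 * #|S|)%N) mulr_sumr.
under eq_bigr do rewrite exchange_big.
rewrite exchange_big; apply: eq_bigr => S _.
rewrite -[X in _ ^+ (X - _)](card_ord g) -prod_if_card.
pose G (k : 'I_g) (i : 'I_n) (b : bool) :=
  n%:R^-1 * (if b then eta else 1 - eta) * ((op i (+) b == B) == (k \in S))%:R.
have factorise a (f : {ffun 'I_g -> bool}) :
  (n%:R^-1 ^+ g * \prod_(k < g) (if f k then eta else 1 - eta)) *
    \prod_(k < g) ((observed op a f k == B) == (k \in S))%:R
  = \prod_(k < g) G k (a k) (f k).
  by rewrite -[g in _ ^+ g]card_ord -prodr_const -!big_split.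
under eq_bigr do under eq_bigr do rewrite factorise.
under eq_bigr do rewrite -(bigA_distr_bigA (fun k => G k _)).
rewrite -(bigA_distr_bigA (fun k i => \sum_(b : bool) G k i b)) /=.
by apply: eq_bigr => k _; rewrite success_prob_sample.
Qed.

Lemma maj_prob_binom_tail g :
  maj_prob g op eta B = binom_tail success_prob (1 - success_prob) g (g./2).+1.
Proof.
rewrite maj_prob_sets (@sum_set_card R _ (fun j => g < 2 * j)%N
  (fun j => success_prob ^+ j * (1 - success_prob) ^+ (g - j))) card_ord.
rewrite /binom_tail big_geq_mkord; apply: eq_big => [j | j _]; last by rewrite /binom_term mulrA.
by rewrite ltn_half_double -mul2n.
Qed.

End MajorityProbability.

Lemma frac_correct_le1 (R : numFieldType) n (op : 'I_n -> bool) B :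
  (0 < n)%N -> frac_correct R op B <= 1.
Proof.
by move=> n0; rewrite /frac_correct ler_pdivrMr ?ltr0n // mul1r ler_nat -[leqRHS]card_ord max_card.
Qed.

Lemma natr_absz_ceil_ge (R : archiRealFieldType) (x : R) : 0 <= x -> x <= (`|Num.ceil x|%N)%:R.
Proof. by move=> x0; rewrite natr_absz ger0_norm ?ceil_ge // ceil_ge0 (lt_le_trans _ x0) ?ltrN10. Qed.

Lemma sample_size_ge (R : archiRealFieldType) (eps : R) : 0 < eps ->
  64 <= (`|Num.ceil (2 ^+ 22 / eps ^+ 2)|%N)%:R * eps ^+ 2.
Proof.
move=> eps0; have := natr_absz_ceil_ge (divr_ge0 (exprn_ge0 22 (ler0n R 2)) (sqr_ge0 eps)).
rewrite -(ler_pM2r (exprn_gt0 2 eps0)) mulfVK ?sqrf_eq0 ?gt_eqF //.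
apply: le_trans; rewrite -[22%N]/(6 + 16)%N exprD.
have -> : 2 ^+ 6 = 64 :> R by rewrite -natrX.
have : 1 <= 2 ^+ 16 :> R by rewrite exprn_ege1 // ler1n.
nra.
Qed.

Theorem mainTheorem4 (R : archiRealFieldType) (eps delta eta : R) (n : nat)
  (op : 'I_n -> bool) (B : bool) :
  0 < eps -> eps <= 1 / 2 -> 0 <= delta ->
  (0 < n)%N ->
  1 / 2 + delta <= frac_correct R op B ->
  0 <= eta -> eta <= 1 / 2 - eps ->
  let r := `|Num.ceil (2 ^+ 22 / eps ^+ 2)|%N in
  let gamma := (2 * r + 1)%N in
  Num.min (1 / 2 + 4 * delta) (1 / 2 + 1 / 100) <= maj_prob gamma op eta B.
Proof.
move=> eps0 eps_le delta0 n0 frac_ge eta0 eta_le /=; set r := `|Num.ceil _|%N.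
have -> : (2 * r + 1 = r.*2.+1)%N by rewrite addn1 -mul2n.
rewrite maj_prob_binom_tail //.
have -> : (r.*2.+1)./2 = r by rewrite /= uphalf_double.
have r_ge : 64 <= r%:R * eps ^+ 2 := sample_size_ge eps0.
set y := success_prob op eta B - 1 / 2.
have y_eq : y = (frac_correct R op B - 1 / 2) * (1 - 2 * eta) by rewrite /y /success_prob; field.
have frac_le1 := frac_correct_le1 R op B n0.
have [y0 y1 y_ge] : [/\ 0 <= y, y <= 1 / 2 & 2 * eps * delta <= y] by split; rewrite y_eq; nra.
have -> : success_prob op eta B = 1 / 2 + y by rewrite addrC subrK.
rewrite (_ : 1 - (1 / 2 + y) = 1 / 2 - y); last by lra.
rewrite majority_tail_bias ge_min.
have := bias_amplification eps0 delta0 y0 y1 y_ge r_ge; rewrite ge_min.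
by case/orP => ?; apply/orP; [left | right]; lra.
Qed.
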